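(* Let $P,Q$ be nonzero coprime integers with $\Delta:=P^2-4Q\neq0$, such that $\alpha/\beta$ is not a root of unity, where $\alpha,\beta$ are the roots of $x^2-Px+Q$. Let $(U_n)$ be the Lucas sequence $U_n=(\alpha^n-\beta^n)/(\alpha-\beta)$. Let $n,k$ be positive integers with $n\ge k$. Then the number \[\left\{{n\atop k}\right\}_{\boldsymbol U}:=\frac{\mathrm{lcm}(U_n,U_{n-1},\dots,U_{n-k+1})}{\mathrm{lcm}(U_1,U_2,\dots,U_k)}\] is a positive integer, and it divides $\binom{n}{k}_{\boldsymbol U}$.
   Context: $U_0=0$, $U_1=1$, $U_{n+2}=PU_{n+1}-QU_n$. For $n\ge k\ge1$, $\binom{n}{k}_{\boldsymbol U}:=\frac{U_nU_{n-1}\cdots U_{n-k+1}}{U_1U_2\cdots U_k}$. *)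

From mathcomp Require Import all_boot all_order all_algebra all_field.
Set Implicit Arguments. Unset Strict Implicit. Unset Printing Implicit Defensive.
Import Order.TTheory GRing.Theory Num.Theory.
Local Open Scope ring_scope.

Fixpoint lucasU (P Q : int) (n : nat) : int :=
  match n with
  | 0%N => 0
  | m.+1 => match m with
            | 0%N => 1
            | l.+1 => P * lucasU P Q m - Q * lucasU P Q l
            end
  end.

Definition lcmU_top (P Q : int) (n k : nat) : nat :=
  \big[lcmn/1%N]_(i < k) `|lucasU P Q (n - i)|%N.

Definition lcmU_bot (P Q : int) (k : nat) : nat :=
  \big[lcmn/1%N]_(i < k) `|lucasU P Q i.+1|%N.

Definition lucas_binom (P Q : int) (n k : nat) : rat :=
  (\prod_(i < k) (lucasU P Q (n - i))%:~R) / (\prod_(i < k) (lucasU P Q i.+1)%:~R).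

Definition lucas_lcm_binom (P Q : int) (n k : nat) : rat :=
  (lcmU_top P Q n k)%:R / (lcmU_bot P Q k)%:R.

(* The sequence m |-> |U_m| is a strong divisibility sequence of positive
   integers: gcd(U_a, U_b) = +-U_gcd(a,b) because P and Q are coprime, and
   U_m <> 0 for m > 0 by Binet's formula since alpha/beta is not a root of
   unity.  For such a sequence u and a prime power q, the indices m > 0 with
   q | u_m are exactly the multiples of the least one, and any k consecutive
   integers contain at least as many multiples of a number as 1, ..., k do.
   Writing v_p(x) = #{e >= 1 | p^e | x} and summing this count over the
   layers q = p^e gives, for every prime p,
     v_p(lcm(u_n..u_(n-k+1))) + v_p(u_1...u_k)
        <= v_p(lcm(u_1..u_k)) + v_p(u_n...u_(n-k+1)),
   as well as v_p(lcm(u_1..u_k)) <= v_p(lcm(u_n..u_(n-k+1))). *)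

From mathcomp Require Import all_boot all_order all_algebra all_field.
From mathcomp Require Import ring zify.
Import Order.TTheory GRing.Theory Num.Theory.

Set Implicit Arguments.
Unset Strict Implicit.
Unset Printing Implicit Defensive.

Lemma sum_dvdn_prefix r k : 0 < r -> \sum_(i < k) (r %| i.+1) = k %/ r.
Proof.
move=> r_gt0; elim: k => [|k IHk]; first by rewrite big_ord0 div0n.
by rewrite big_ord_recr /= IHk divnS // addnC.
Qed.

Lemma sum_dvdn_window r n k : 0 < r -> k <= n ->
  \sum_(i < k) (r %| n - i) + (n - k) %/ r = n %/ r.
Proof.
move=> r_gt0; elim: k => [|k IHk] lt_kn; first by rewrite big_ord0 subn0.
rewrite big_ord_recr /= -addnA -{1}(subnSK lt_kn) -divnS //.
by rewrite subnSK // IHk // ltnW.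
Qed.

Lemma leq_sum_dvdn_window r n k : k <= n ->
  \sum_(i < k) (r %| i.+1) <= \sum_(i < k) (r %| n - i).
Proof.
move=> le_kn; have [-> | r_gt0] := posnP r.
  by rewrite big1 // => i _; rewrite dvd0n.
rewrite sum_dvdn_prefix // -(leq_add2r ((n - k) %/ r)) sum_dvdn_window //.
by rewrite -[X in _ <= X %/ r](subnK le_kn) divnD // addnC leq_addr.
Qed.

Section MultipleGcdClosed.

Variable A : pred nat.
Hypothesis A_mull : forall d m, 0 < m -> d %| m -> A d -> A m.
Hypothesis A_gcd : forall a b, 0 < a -> 0 < b -> A a -> A b -> A (gcdn a b).

(* Such an [A] is the set of positive multiples of its least positive element. *)
Lemma leq_sum_window_closed n k : k <= n ->
  \sum_(i < k) A i.+1 <= \sum_(i < k) A (n - i).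
Proof.
move=> le_kn.
have [/existsP[i0 Ai0] | /existsP noA] := boolP [exists i : 'I_k, A i.+1]; last first.
  rewrite big1 // => i _; apply/eqP; rewrite eqb0.
  by apply/negP => Ai; apply: noA; exists i.
have exA : exists m, (0 < m) && A m by exists i0.+1.
have [r /andP[r_gt0 Ar] r_min] := ex_minnP exA.
have A_dvdn m : 0 < m -> A m = (r %| m).
  move=> m_gt0; apply/idP/idP => [Am | /A_mull-> //].
  have g_gt0 : 0 < gcdn r m by rewrite gcdn_gt0 r_gt0.
  have le_r_g : r <= gcdn r m by apply: r_min; rewrite g_gt0 A_gcd.
  by apply/gcdn_idPl/eqP; rewrite eqn_leq le_r_g dvdn_leq ?dvdn_gcdl.
rewrite (eq_bigr (fun i : 'I_k => (r %| i.+1) : nat)) => [|i _]; last by rewrite A_dvdn.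
rewrite [X in _ <= X](eq_bigr (fun i : 'I_k => (r %| n - i) : nat)) => [|i _].
  exact: leq_sum_dvdn_window.
by rewrite A_dvdn // subn_gt0 (leq_trans (ltn_ord i)).
Qed.

End MultipleGcdClosed.

Lemma sum_ltn x M : \sum_(t < M) (t < x) = minn x M.
Proof.
elim: M => [|M IHM]; first by rewrite big_ord0 minn0.
by rewrite big_ord_recr /= IHM; case: (ltnP M x) => ?; lia.
Qed.

Lemma ltn_bigmax_sum k (F : 'I_k -> nat) t :
  (t < \max_(i < k) F i) = (0 < \sum_(i < k) (t < F i)).
Proof.
rewrite ltnNge lt0n sum_nat_eq0; congr negb.
apply/bigmax_leqP/forallP => [le_F_t i | lt_F_t i _]; first by rewrite eqb0 -leqNgt le_F_t.
by have := lt_F_t i; rewrite eqb0 -leqNgt.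
Qed.

Lemma bigmax_layers k (F : 'I_k -> nat) M : \max_(i < k) F i <= M ->
  \max_(i < k) F i = \sum_(t < M) (0 < \sum_(i < k) (t < F i)).
Proof.
move=> le_max_M; rewrite -{1}(minn_idPl le_max_M) -sum_ltn.
by apply: eq_bigr => t _; rewrite ltn_bigmax_sum.
Qed.

Lemma sum_layers k (F : 'I_k -> nat) M : (forall i, F i <= M) ->
  \sum_(i < k) F i = \sum_(t < M) \sum_(i < k) (t < F i).
Proof.
move=> le_F_M; rewrite exchange_big /=.
by apply: eq_bigr => i _; rewrite sum_ltn (minn_idPl (le_F_M i)).
Qed.

Section DivisorMonotone.

Variable f : nat -> nat.
Hypothesis f_dvd : forall d m, 0 < m -> d %| m -> f d <= f m.
Hypothesis f_gcd : forall a b, 0 < a -> 0 < b -> minn (f a) (f b) <= f (gcdn a b).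
Variables n k : nat.
Hypothesis le_kn : k <= n.

Lemma leq_layer_window t :
  \sum_(i < k) (t < f i.+1) <= \sum_(i < k) (t < f (n - i)).
Proof.
apply: (@leq_sum_window_closed (fun m => t < f m)) => // [d m m_gt0 dm | a b a_gt0 b_gt0 Aa Ab].
  by move=> Ad; apply: leq_trans Ad (f_dvd m_gt0 dm).
by apply: leq_trans (f_gcd a_gt0 b_gt0); rewrite leq_min Aa.
Qed.

Let M := \max_(i < k) f i.+1 + \max_(i < k) f (n - i).

Let max_bot_le : \max_(i < k) f i.+1 <= M. Proof. exact: leq_addr. Qed.
Let max_top_le : \max_(i < k) f (n - i) <= M. Proof. exact: leq_addl. Qed.

Lemma leq_bigmax_window : \max_(i < k) f i.+1 <= \max_(i < k) f (n - i).
Proof.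
rewrite (bigmax_layers max_bot_le) (bigmax_layers max_top_le).
by apply: leq_sum => t _; have := leq_layer_window t; lia.
Qed.

Lemma bigmax_sum_window :
  \max_(i < k) f (n - i) + \sum_(i < k) f i.+1 <=
  \max_(i < k) f i.+1 + \sum_(i < k) f (n - i).
Proof.
have le_bot (i : 'I_k) : f i.+1 <= M := leq_trans (leq_bigmax i) max_bot_le.
have le_top (i : 'I_k) : f (n - i) <= M := leq_trans (leq_bigmax i) max_top_le.
rewrite (bigmax_layers max_top_le) (bigmax_layers max_bot_le).
rewrite (sum_layers le_bot) (sum_layers le_top) -!big_split /=.
apply: leq_sum => t _; have := leq_layer_window t.
by set cB := \sum_(i < k) _; set cT := \sum_(i < k) _; lia.
Qed.

End DivisorMonotone.

Lemma dvdn_logn m n : 0 < m -> 0 < n ->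
  (forall p, prime p -> logn p m <= logn p n) -> m %| n.
Proof.
move=> m_gt0 n_gt0 le_logn; apply/(dvdn_partP _ m_gt0) => p.
by rewrite mem_primes p_part => /andP[p_pr _]; rewrite pfactor_dvdn ?le_logn.
Qed.

Lemma logn_biglcm (I : finType) (P : pred I) (F : I -> nat) p :
  (forall i, P i -> 0 < F i) ->
  logn p (\big[lcmn/1]_(i | P i) F i) = \max_(i | P i) logn p (F i).
Proof.
move=> F_gt0.
suff [] : 0 < \big[lcmn/1]_(i | P i) F i /\
          logn p (\big[lcmn/1]_(i | P i) F i) = \max_(i | P i) logn p (F i) by [].
elim/big_rec2: _ => [|i x y Pi [x_gt0 <-]]; first by rewrite logn1.
by rewrite lcmn_gt0 F_gt0 // logn_lcm ?F_gt0.
Qed.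

Lemma biglcmn_gt0 (I : finType) (P : pred I) (F : I -> nat) :
  (forall i, P i -> 0 < F i) -> 0 < \big[lcmn/1]_(i | P i) F i.
Proof. by move=> F_gt0; elim/big_ind: _ => // x y; rewrite lcmn_gt0 => -> ->. Qed.

Lemma logn_prod (I : finType) (P : pred I) (F : I -> nat) p :
  (forall i, P i -> 0 < F i) ->
  logn p (\prod_(i | P i) F i) = \sum_(i | P i) logn p (F i).
Proof.
move=> F_gt0.
suff [] : 0 < \prod_(i | P i) F i /\
          logn p (\prod_(i | P i) F i) = \sum_(i | P i) logn p (F i) by [].
elim/big_rec2: _ => [|i x y Pi [x_gt0 <-]]; first by rewrite logn1.
by rewrite muln_gt0 F_gt0 // lognM ?F_gt0.
Qed.

Section StrongDivisibility.

Variable u : nat -> nat.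
Hypothesis u_gt0 : forall m, 0 < m -> 0 < u m.
Hypothesis u_gcd : forall a b, u (gcdn a b) = gcdn (u a) (u b).

Lemma dvdn_sdseq d m : d %| m -> u d %| u m.
Proof. by move/gcdn_idPl => gcd_dm; rewrite -gcd_dm u_gcd dvdn_gcdr. Qed.

Variables n k : nat.
Hypothesis le_kn : k <= n.

Local Notation lcm_top := (\big[lcmn/1]_(i < k) u (n - i)).
Local Notation lcm_bot := (\big[lcmn/1]_(i < k) u i.+1).

Let top_gt0 (i : 'I_k) : 0 < u (n - i).
Proof. by rewrite u_gt0 // subn_gt0 (leq_trans (ltn_ord i)). Qed.

Let bot_gt0 (i : 'I_k) : 0 < u i.+1. Proof. exact: u_gt0. Qed.

Let logn_sdseq_dvd p d m : 0 < m -> d %| m -> logn p (u d) <= logn p (u m).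
Proof. by move=> m_gt0 /dvdn_sdseq; apply: dvdn_leq_log; rewrite u_gt0. Qed.

Let logn_sdseq_gcd p a b : 0 < a -> 0 < b ->
  minn (logn p (u a)) (logn p (u b)) <= logn p (u (gcdn a b)).
Proof. by move=> a_gt0 b_gt0; rewrite u_gcd logn_gcd ?u_gt0. Qed.

Lemma dvdn_lcm_window : lcm_bot %| lcm_top.
Proof.
apply: dvdn_logn => [||p _]; rewrite ?biglcmn_gt0 // !logn_biglcm //.
exact: (leq_bigmax_window (f := fun m => logn p (u m))
          (logn_sdseq_dvd p) (logn_sdseq_gcd p) le_kn).
Qed.

Lemma dvdn_lcm_prod_window :
  lcm_top * \prod_(i < k) u i.+1 %| lcm_bot * \prod_(i < k) u (n - i).
Proof.
have gt0 := (biglcmn_gt0, prodn_gt0).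
apply: dvdn_logn => [||p _]; rewrite ?muln_gt0 ?gt0 //.
rewrite !lognM ?gt0 // !logn_biglcm // !logn_prod //.
exact: (bigmax_sum_window (f := fun m => logn p (u m))
          (logn_sdseq_dvd p) (logn_sdseq_gcd p) le_kn).
Qed.

End StrongDivisibility.

Local Open Scope ring_scope.

Lemma absz_prod (I : finType) (r : pred I) (F : I -> int) :
  `|(\prod_(i | r i) F i)%R|%N = (\prod_(i | r i) `|F i|%N)%N.
Proof. exact: (big_morph _ abszM). Qed.

Lemma intr_ratio_dvdz (R : numFieldType) (x y : int) (a b : nat) :
  (0 < b)%N -> y != 0 -> (a%:Z * y %| b%:Z * x)%Z ->
  exists z : int, x%:~R / y%:~R = a%:R / b%:R * z%:~R :> R.
Proof.
move=> b_gt0 y_neq0 /dvdzP[z Ez]; exists z.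
have b_neq0 : b%:R != 0 :> R by rewrite pnatr_eq0 -lt0n.
have y_neq0' : y%:~R != 0 :> R by rewrite intr_eq0.
have Ez' : b%:R * x%:~R = z%:~R * (a%:R * y%:~R) :> R.
  by have := congr1 (intr : int -> R) Ez; rewrite !rmorphM.
by rewrite -[x%:~R](mulKf b_neq0) Ez'; field; rewrite b_neq0 y_neq0'.
Qed.

Section LucasSequence.

Variables P Q : int.
Local Notation U := (lucasU P Q).

Lemma lucasU_SS n : U n.+2 = P * U n.+1 - Q * U n. Proof. by []. Qed.

Lemma lucasU_add a b : U (a + b).+1 = U a.+1 * U b.+1 - Q * U a * U b.
Proof.
suff add2 c : U (a + c).+1 = U a.+1 * U c.+1 - Q * U a * U c /\
              U (a + c.+1).+1 = U a.+1 * U c.+2 - Q * U a * U c.+1.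
  by case: (add2 b).
elim: c => [|c [IHc IHc1]].
  by rewrite addn0 addn1 !lucasU_SS; split; rewrite /=; ring.
split=> //; rewrite addnS lucasU_SS IHc1 addnS IHc !lucasU_SS; ring.
Qed.

Lemma dvdz_lucasU d m : (d %| m)%N -> (U d %| U m)%Z.
Proof.
case/dvdnP=> q ->{m}; case: d => [|d]; first by rewrite muln0 dvdzz.
elim: q => [|q IHq]; first by rewrite mul0n dvdz0.
rewrite mulSn addSn addnC lucasU_add.
apply: rpredB; first exact: dvdz_mull (dvdzz _).
by rewrite -mulrA dvdz_mull // dvdz_mulr.
Qed.

Lemma lucasU_binet (R : comPzRingType) (alpha beta : R) :
  alpha + beta = P%:~R -> alpha * beta = Q%:~R ->
  forall j, (alpha - beta) * (U j)%:~R = alpha ^+ j - beta ^+ j.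
Proof.
move=> sum_ab prod_ab.
suff binet2 j : (alpha - beta) * (U j)%:~R = alpha ^+ j - beta ^+ j /\
    (alpha - beta) * (U j.+1)%:~R = alpha ^+ j.+1 - beta ^+ j.+1.
  by move=> j; case: (binet2 j).
elim: j => [|j [IHj IHj1]]; first by rewrite /= expr0 expr1 subrr mulr0 mulr1.
split=> //; rewrite lucasU_SS rmorphB !rmorphM /= -sum_ab -prod_ab.
transitivity ((alpha + beta) * ((alpha - beta) * (U j.+1)%:~R) -
              alpha * beta * ((alpha - beta) * (U j)%:~R)); first ring.
by rewrite IHj IHj1 !exprS; ring.
Qed.

Lemma lucas_roots : exists alpha beta : algC,
  alpha + beta = P%:~R /\ alpha * beta = Q%:~R.
Proof.
pose D : algC := sqrtC (P ^+ 2 - 4 * Q)%:~R.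
exists ((P%:~R + D) / 2), ((P%:~R - D) / 2); split; first by field.
have D2 : D ^+ 2 = P%:~R ^+ 2 - 4 * Q%:~R.
  by rewrite sqrtCK rmorphB rmorphXn /= rmorphM.
transitivity ((P%:~R ^+ 2 - D ^+ 2) / 4 : algC); first by field.
by rewrite D2; field.
Qed.

Lemma lucasU_neq0 :
  (forall alpha beta : algC, alpha + beta = P%:~R -> alpha * beta = Q%:~R ->
     forall m, (0 < m)%N -> (alpha / beta) ^+ m != 1) ->
  Q != 0 -> forall n, (0 < n)%N -> U n != 0.
Proof.
move=> nondeg Q_neq0 n n_gt0.
have [alpha [beta [sum_ab prod_ab]]] := lucas_roots.
have beta_neq0 : beta != 0.
  apply: contraNneq Q_neq0 => beta0.
  by rewrite -(intr_eq0 algC) -prod_ab beta0 mulr0.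
apply: contraNneq (nondeg _ _ sum_ab prod_ab n n_gt0) => Un0.
have : alpha ^+ n = beta ^+ n.
  by apply/eqP; rewrite -subr_eq0 -(lucasU_binet sum_ab prod_ab) Un0 mulr0.
by rewrite expr_div_n => ->; rewrite divff // expf_neq0.
Qed.

Hypothesis coPQ : coprimez P Q.

Lemma coprimez_lucasU_Q n : coprimez (U n.+1) Q.
Proof.
elim: n => [|n IHn]; first by apply/coprimezP; exists (1, 0); rewrite /=; ring.
case: n IHn => [|n] IHn; first by rewrite lucasU_SS /= mulr1 mulr0 subr0.
have /coprimezP[[a b] Bez_UQ] := IHn; cbn [fst snd] in Bez_UQ.
have /coprimezP[[x y] Bez_PQ] := coPQ; cbn [fst snd] in Bez_PQ.
apply/coprimezP.
exists (a * x, a * y * U n.+2 + b * x * P + b * y * Q + a * x * U n.+1).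
cbn [fst snd]; transitivity ((a * U n.+2 + b * Q) * (x * P + y * Q)).
  by rewrite (lucasU_SS n.+1); ring.
by rewrite Bez_UQ Bez_PQ mulr1.
Qed.

Lemma coprimez_lucasU_S n : coprimez (U n.+1) (U n).
Proof.
elim: n => [|n IHn]; first by apply/coprimezP; exists (1, 0); rewrite /=; ring.
have /coprimezP[[a b] Bez_UU] := IHn; cbn [fst snd] in Bez_UU.
have /coprimezP[[c d] Bez_UQ] := coprimez_lucasU_Q n; cbn [fst snd] in Bez_UQ.
apply/coprimezP.
exists (- (b * d), a * c * U n.+1 + a * d * Q + b * c * U n + b * d * P).
cbn [fst snd]; transitivity ((a * U n.+1 + b * U n) * (c * U n.+1 + d * Q)).
  by rewrite (lucasU_SS n); ring.
by rewrite Bez_UU Bez_UQ mulr1.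
Qed.

Lemma dvdz_lucasU_addr d a c :
  (d %| U (a + c.+1))%Z -> (d %| U c.+1)%Z -> (d %| U a)%Z.
Proof.
move=> d_sum d_c.
have co_d : coprimez d (Q * U c).
  rewrite coprimezE; apply: (@coprime_dvdl _ `|U c.+1|%N).
    by rewrite -dvdzE.
  by rewrite -coprimezE coprimezMr coprimez_lucasU_Q coprimez_lucasU_S.
rewrite -(Gauss_dvdzl _ co_d).
have -> : U a * (Q * U c) = U a.+1 * U c.+1 - U (a + c.+1).
  by rewrite addnS lucasU_add; ring.
by rewrite rpredB ?dvdz_mull.
Qed.

Lemma dvdz_lucasU_gcd d m n :
  (d %| U m)%Z -> (d %| U n)%Z -> (d %| U (gcdn m n))%Z.
Proof.
move=> d_m d_n; have [-> | m_gt0] := posnP m; first by rewrite gcd0n.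
have [km kn Bezout _] := egcdnP n m_gt0.
have d_km : (d %| U (kn * n + gcdn m n))%Z.
  by rewrite -Bezout (dvdz_trans d_m) ?dvdz_lucasU ?dvdn_mull.
have d_kn : (d %| U (kn * n))%Z by rewrite (dvdz_trans d_n) ?dvdz_lucasU ?dvdn_mull.
case: (kn * n)%N d_km d_kn => [|c] d_km d_kn; first by rewrite add0n in d_km.
by apply: dvdz_lucasU_addr d_kn; rewrite addnC.
Qed.

Lemma lucasU_gcd m n : `|U (gcdn m n)|%N = gcdn `|U m| `|U n|.
Proof.
apply/eqP; rewrite eqn_dvd dvdn_gcd -!dvdzE.
rewrite !dvdz_lucasU ?dvdn_gcdl ?dvdn_gcdr //=.
apply: (dvdz_lucasU_gcd (d := (gcdn `|U m| `|U n|)%:Z));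
  by rewrite dvdzE /= ?dvdn_gcdl ?dvdn_gcdr.
Qed.

End LucasSequence.

Theorem theorem8 (P Q : int) (n k : nat) :
  P != 0 -> Q != 0 -> coprimez P Q -> P ^+ 2 - 4 * Q != 0 ->
  (forall alpha beta : algC,
      alpha + beta = P%:~R -> alpha * beta = Q%:~R ->
      forall m : nat, (0 < m)%N -> (alpha / beta) ^+ m != 1) ->
  (0 < k)%N -> (k <= n)%N ->
  (exists2 m : nat, (0 < m)%N & lucas_lcm_binom P Q n k = m%:R) /\
  (exists z : int, lucas_binom P Q n k = lucas_lcm_binom P Q n k * z%:~R).
Proof.
move=> _ Q_neq0 coPQ _ nondeg _ le_kn.
have u_gt0 m : (0 < m)%N -> (0 < `|lucasU P Q m|)%N.
  by move=> m_gt0; rewrite absz_gt0 lucasU_neq0.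
have u_gcd := lucasU_gcd coPQ.
have top_gt0 : (0 < lcmU_top P Q n k)%N.
  by apply: biglcmn_gt0 => i _; rewrite u_gt0 // subn_gt0 (leq_trans (ltn_ord i)).
have bot_gt0 : (0 < lcmU_bot P Q k)%N by apply: biglcmn_gt0 => i _; apply: u_gt0.
have bot_dvd_top := dvdn_lcm_window u_gt0 u_gcd le_kn.
split.
  exists (lcmU_top P Q n k %/ lcmU_bot P Q k)%N.
    by rewrite divn_gt0 // dvdn_leq.
  by rewrite natr_div // unitfE pnatr_eq0 -lt0n.
rewrite /lucas_binom -!rmorph_prod; apply: intr_ratio_dvdz => //.
  by rewrite -absz_gt0 absz_prod; apply: prodn_gt0 => i; apply: u_gt0.
rewrite dvdzE !abszM !absz_nat !absz_prod.
exact: (dvdn_lcm_prod_window u_gt0 u_gcd le_kn).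
Qed.
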